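(* In the setting described in the context, for $n\ge0$ let $\tilde\mu'_{m,n}=\max\{x\in[\min P,d]: f^{m+2n}(x)=d\}$, and for $k\ge1$ let $\tilde\mu_{m,n,k}=\min\{x\in[\tilde\mu'_{m,n},\tilde\mu'_{m,n+1}]: f^{m+2n+2k}(x)=d\}$ (these sets are nonempty). Then for each $n\ge1$ and $k\ge1$, every periodic point of $f$ in $[\tilde\mu'_{m,n},\tilde\mu_{m,n,k}]$ whose least period is odd has least period $\ge m+2n+2k+2$.
   Context: Let $I$ be a compact interval and $f:I\to I$ continuous; $f^1=f$, $f^n=f\circ f^{n-1}$. A point $x_0$ is a periodic point of least period $k$ (a period-$k$ point) if $f^k(x_0)=x_0$ and $f^i(x_0)\ne x_0$ for $0<i<k$. Let $m\ge3$ be odd and let $P$ be a periodic orbit of $f$ of least period $m$. Put $e=f^{m-1}(\min P)$. Let $v\in[\min P,e)$ be a point with $f(v)=e$, and let $z\in(v,e)$ be a fixed point of $f$ (such points exist). Define $z_0=\min\{x\in[v,z]: f^2(x)=x\}$ and $d=\max\{x\in[\min P,v]: f^2(x)=z_0\}$ (both sets are nonempty). *)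

From Stdlib Require Import Reals Lra Lia.
Open Scope R_scope.

Definition iter (n : nat) (f : R -> R) (x : R) : R := Nat.iter n f x.

Definition least_period (f : R -> R) (k : nat) (x : R) : Prop :=
  (0 < k)%nat /\ iter k f x = x /\
  (forall i : nat, (0 < i < k)%nat -> iter i f x <> x).

Definition is_min (S : R -> Prop) (y : R) : Prop :=
  S y /\ forall x, S x -> y <= x.
Definition is_max (S : R -> Prop) (y : R) : Prop :=
  S y /\ forall x, S x -> x <= y.

Definition cont_on (f : R -> R) (a b : R) : Prop :=
  forall x, a <= x <= b -> forall eps, 0 < eps -> exists delta, 0 < delta /\
    forall y, a <= y <= b -> Rabs (y - x) < delta -> Rabs (f y - f x) < eps.

(* The orbit of d enters, after two steps, the 2-cycle {z0, f z0}, which lies to the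
   right of v; and f^2 stretches [d, v] over itself (d goes to z0 >= v, v goes to
   min P <= d), so d has f^(2j)-preimages in [d, v] for every j.  Let x lie in the
   window and f^t x = x < d with t odd (t = 3 if x is fixed).  If t <= m + 2n, then
   f^t x < d <= v <= f^t d and the intermediate value theorem puts an
   f^(m+2n)-preimage of d in (x, d], contradicting the maximality of mu'_n.  If
   t > m + 2n, then f^t mu'_n = f^(t-m-2n) d >= v > f^t x, giving an
   f^(m+2n+2k)-preimage of d in [mu'_n, x), contradicting the minimality of mu_{n,k}.
   Both steps use that t and m + 2n are odd, so their difference is even. *)
From Stdlib Require Import Reals Lra Lia.
Open Scope R_scope.

Lemma iter_S n f x : iter (S n) f x = f (iter n f x).
Proof. reflexivity. Qed.

Lemma iter_add n k f x : iter (n + k) f x = iter n f (iter k f x).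
Proof. unfold iter. apply Nat.iter_add. Qed.

Lemma iter_mul_fixed k f x : iter k f x = x -> forall s, iter (s * k) f x = x.
Proof.
  intros Hx s; induction s as [|s IH]; [reflexivity|].
  rewrite Nat.mul_succ_l, iter_add, Hx; exact IH.
Qed.

Lemma f_iter_pred_period f m p : least_period f m p -> f (iter (m - 1) f p) = p.
Proof.
  intros [Hm [Hp _]]. rewrite <- iter_S.
  replace (S (m - 1)) with m by lia. exact Hp.
Qed.

Lemma odd_return_time_ge3 f q x : least_period f q x -> Nat.Odd q ->
  exists t, Nat.Odd t /\ (3 <= t <= Nat.max 3 q)%nat /\ iter t f x = x.
Proof.
  intros [_ [Hx _]] [u ->]. destruct u as [|u].
  - exists 3%nat. split; [exists 1%nat; reflexivity|].
    split; [lia|]. exact (iter_mul_fixed 1 f x Hx 3).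
  - exists (2 * S u + 1)%nat. split; [eexists; reflexivity|]. split; [lia | exact Hx].
Qed.

Lemma iter_ge_of_2cycle f d y c :
  iter 2 f d = y -> iter 2 f y = y -> c <= y -> c <= f y ->
  forall j, (2 <= j)%nat -> c <= iter j f d.
Proof.
  intros Hd Hy Hcy Hcfy j Hj.
  destruct (Nat.Even_or_Odd j) as [[s Hs] | [s Hs]].
  - replace j with ((s - 1) * 2 + 2)%nat by lia.
    rewrite iter_add, Hd, iter_mul_fixed; assumption.
  - replace j with (S ((s - 1) * 2 + 2))%nat by lia.
    rewrite iter_S, iter_add, Hd, iter_mul_fixed; assumption.
Qed.

Lemma cont_on_sub f a b lo hi : cont_on f a b -> a <= lo -> hi <= b -> cont_on f lo hi.
Proof.
  intros Hc Ha Hb x Hx eps He.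
  destruct (Hc x ltac:(lra) eps He) as [delta [Hdelta Hy]].
  exists delta; split; [exact Hdelta|]. intros y Hy1 Hy2. apply Hy; [lra | exact Hy2].
Qed.

Lemma cont_on_minus_id f lo hi : cont_on f lo hi -> cont_on (fun x => f x - x) lo hi.
Proof.
  intros Hc x Hx eps He.
  destruct (Hc x Hx (eps / 2) ltac:(lra)) as [delta [Hdelta Hy]].
  exists (Rmin delta (eps / 2)); split; [apply Rmin_pos; lra|].
  intros y Hy1 Hy2.
  pose proof (Rmin_l delta (eps / 2)); pose proof (Rmin_r delta (eps / 2)).
  specialize (Hy y Hy1 ltac:(lra)).
  replace (f y - y - (f x - x)) with ((f y - f x) + - (y - x)) by ring.
  pose proof (Rabs_triang (f y - f x) (- (y - x))). rewrite Rabs_Ropp in *. lra.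
Qed.

Definition clamp (lo hi x : R) : R := Rmax lo (Rmin hi x).

Lemma clamp_in lo hi x : lo <= hi -> lo <= clamp lo hi x <= hi.
Proof. intros H. unfold clamp, Rmax, Rmin. repeat destruct Rle_dec; lra. Qed.

Lemma clamp_id lo hi x : lo <= x <= hi -> clamp lo hi x = x.
Proof. intros H. unfold clamp, Rmax, Rmin. repeat destruct Rle_dec; lra. Qed.

Lemma clamp_lipschitz lo hi x y : lo <= hi ->
  Rabs (clamp lo hi y - clamp lo hi x) <= Rabs (y - x).
Proof.
  intros H. unfold clamp, Rmax, Rmin.
  repeat destruct Rle_dec; unfold Rabs; repeat destruct Rcase_abs; lra.
Qed.

Lemma continuity_clamp_comp f lo hi : lo <= hi -> cont_on f lo hi ->
  continuity (fun x => f (clamp lo hi x)).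
Proof.
  intros Hlh Hc x eps He.
  destruct (Hc _ (clamp_in lo hi x Hlh) eps He) as [delta [Hdelta Hy]].
  exists delta; split; [exact Hdelta|].
  intros y [_ Hyx]. simpl in *. unfold R_dist in *.
  apply Hy; [apply clamp_in; exact Hlh|].
  pose proof (clamp_lipschitz lo hi x y Hlh). lra.
Qed.

(* Stdlib's IVT needs continuity on all of R, hence the detour through [clamp]. *)
Lemma ivt_cont_on f lo hi c : lo <= hi -> cont_on f lo hi ->
  (f lo <= c <= f hi) \/ (f hi <= c <= f lo) ->
  exists y, lo <= y <= hi /\ f y = c.
Proof.
  intros Hlh Hc Hval.
  set (g := fun x => f (clamp lo hi x) - c).
  assert (Hg : continuity g).
  { apply continuity_minus; [apply continuity_clamp_comp; assumption |
                             apply continuity_const; intros ? ?; reflexivity]. }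
  assert (Hsign : g lo * g hi <= 0).
  { unfold g. rewrite (clamp_id lo hi lo), (clamp_id lo hi hi) by lra.
    destruct Hval; nra. }
  destruct (IVT_cor g lo hi Hg Hlh Hsign) as [y [Hy Hgy]].
  exists y; split; [exact Hy|]. unfold g in Hgy. rewrite clamp_id in Hgy by exact Hy. lra.
Qed.

Lemma le_image_at_right_end f lo hi : lo <= hi -> cont_on f lo hi -> lo <= f lo ->
  (forall c, lo <= c < hi -> f c <> c) -> hi <= f hi.
Proof.
  intros Hlh Hc Hlo Hnofix.
  destruct (Rle_or_lt hi (f hi)) as [|Hlt]; [assumption|exfalso].
  destruct (ivt_cont_on (fun x => f x - x) lo hi 0 Hlh (cont_on_minus_id f lo hi Hc))
    as [c [Hc1 Hc2]]; [right; lra|].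
  destruct (Rle_lt_or_eq_dec c hi (proj2 Hc1)) as [Hlt' | ->].
  - apply (Hnofix c); lra.
  - lra.
Qed.

Section Interval.

Variables (a b : R) (f : R -> R).
Hypothesis Hmaps : forall x, a <= x <= b -> a <= f x <= b.
Hypothesis Hcont : cont_on f a b.

Lemma iter_maps n x : a <= x <= b -> a <= iter n f x <= b.
Proof.
  revert x; induction n as [|n IH]; intros x Hx; [exact Hx|].
  rewrite iter_S. apply Hmaps, IH, Hx.
Qed.

Lemma cont_on_iter n : cont_on (iter n f) a b.
Proof.
  induction n as [|n IH].
  - intros x _ eps He. exists eps; split; [exact He|]. intros y _ Hy. exact Hy.
  - intros x Hx eps He.
    destruct (Hcont (iter n f x) (iter_maps n x Hx) eps He) as [d1 [Hd1 H1]].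
    destruct (IH x Hx d1 Hd1) as [d2 [Hd2 H2]].
    exists d2; split; [exact Hd2|]. intros y Hy Hyx. rewrite !iter_S.
    apply H1; [apply iter_maps, Hy | apply H2; assumption].
Qed.

Section Horseshoe.

Variables (d v : R).
Hypothesis Had : a <= d.
Hypothesis Hvb : v <= b.
Hypothesis Hdv : d <= v.
Hypothesis Hv_down : iter 2 f v <= d.
Hypothesis Hd_orbit : forall j, (2 <= j)%nat -> v <= iter j f d.

Lemma iter2_covers j y : d <= y <= v -> exists c, d <= c <= v /\ iter (2 * j) f c = y.
Proof.
  revert y; induction j as [|j IH]; intros y Hy.
  - exists y; split; [exact Hy | reflexivity].
  - destruct (IH y Hy) as [c' [Hc' Hc'y]].
    destruct (ivt_cont_on (iter 2 f) d v c' Hdv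
                (cont_on_sub _ a b d v (cont_on_iter 2) Had Hvb)) as [c [Hc Hcc']].
    { right. pose proof (Hd_orbit 2 (le_n 2)). lra. }
    exists c; split; [exact Hc|].
    replace (2 * S j)%nat with (2 * j + 2)%nat by lia.
    rewrite iter_add, Hcc'. exact Hc'y.
Qed.

Lemma crossing_up i j x0 x1 : a <= x0 <= x1 -> x1 <= b ->
  iter i f x0 < d -> v <= iter i f x1 ->
  exists y, x0 < y <= x1 /\ iter (2 * j + i) f y = d.
Proof.
  intros Hx0 Hx1 Hlow Hhigh.
  destruct (iter2_covers j d ltac:(lra)) as [c [Hc Hcd]].
  destruct (ivt_cont_on (iter i f) x0 x1 c (proj2 Hx0)
              (cont_on_sub _ a b x0 x1 (cont_on_iter i) (proj1 Hx0) Hx1)) as [y [Hy Hyc]].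
  { left. lra. }
  exists y; split.
  - destruct (Rle_lt_or_eq_dec x0 y (proj1 Hy)) as [Hlt | <-]; lra.
  - rewrite iter_add, Hyc. exact Hcd.
Qed.

Lemma crossing_down i j x0 x1 : a <= x0 <= x1 -> x1 <= b ->
  v <= iter i f x0 -> iter i f x1 < d ->
  exists y, x0 <= y < x1 /\ iter (2 * j + i) f y = d.
Proof.
  intros Hx0 Hx1 Hhigh Hlow.
  destruct (iter2_covers j d ltac:(lra)) as [c [Hc Hcd]].
  destruct (ivt_cont_on (iter i f) x0 x1 c (proj2 Hx0)
              (cont_on_sub _ a b x0 x1 (cont_on_iter i) (proj1 Hx0) Hx1)) as [y [Hy Hyc]].
  { right. lra. }
  exists y; split.
  - destruct (Rle_lt_or_eq_dec y x1 (proj2 Hy)) as [Hlt | ->]; lra.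
  - rewrite iter_add, Hyc. exact Hcd.
Qed.

Lemma no_odd_cycle_in_window N K lo hi x t :
  Nat.Odd N -> Nat.Odd t -> (3 <= t <= N + 2 * K)%nat ->
  a <= lo -> hi < d -> lo <= x <= hi ->
  iter N f lo = d ->
  (forall y, lo < y <= d -> iter N f y <> d) ->
  (forall y, lo <= y < hi -> iter (N + 2 * K) f y <> d) ->
  iter t f x <> x.
Proof.
  intros [r HN] [s Ht] Htbound Hlo Hhi Hx Hlo_d Hlo_last Hhi_first Hfix.
  destruct (Nat.le_gt_cases t N) as [HtN | HtN].
  - destruct (crossing_up t (r - s) x d ltac:(lra) ltac:(lra))
      as [y [Hy Hyd]].
    + rewrite Hfix. lra.
    + apply Hd_orbit. lia.
    + apply (Hlo_last y); [lra|].
      replace N with (2 * (r - s) + t)%nat by lia. exact Hyd.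
  - destruct (crossing_down t (r + K - s) lo x ltac:(lra) ltac:(lra))
      as [y [Hy Hyd]].
    + replace t with ((t - N) + N)%nat by lia.
      rewrite iter_add, Hlo_d. apply Hd_orbit. lia.
    + rewrite Hfix. lra.
    + apply (Hhi_first y); [lra|].
      replace (N + 2 * K)%nat with (2 * (r + K - s) + t)%nat by lia. exact Hyd.
Qed.

End Horseshoe.

Lemma horseshoe_at_d m p v z z0 d :
  (3 <= m)%nat -> least_period f m p -> a <= p <= b ->
  p <= v < iter (m - 1) f p -> f v = iter (m - 1) f p ->
  z < iter (m - 1) f p -> is_min (fun x => v <= x <= z /\ iter 2 f x = x) z0 ->
  p <= d <= v -> iter 2 f d = z0 ->
  d < v /\ iter 2 f v <= d /\ forall j, (2 <= j)%nat -> v <= iter j f d.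
Proof.
  intros Hm3 Hper Hp Hv HfvE HzE [[Hvz0 Hz0_2] Hz0_min] Hd Hd_2.
  pose proof (f_iter_pred_period f m p Hper) as HfE.
  assert (Hf2v : iter 2 f v = p) by (change (f (f v) = p); rewrite HfvE; exact HfE).
  assert (Hp_lt_v : p < v).
  { destruct (Rle_lt_or_eq_dec p v (proj1 Hv)) as [Hlt | <-]; [exact Hlt|].
    destruct Hper as [_ [_ Hmin]]. exfalso. apply (Hmin 2%nat ltac:(lia) Hf2v). }
  assert (HEb : iter (m - 1) f p <= b) by apply (iter_maps (m - 1) p Hp).
  assert (Hz0_image : z0 <= f z0).
  { apply (le_image_at_right_end f v z0 (proj1 Hvz0)
             (cont_on_sub f a b v z0 Hcont ltac:(lra) ltac:(lra))); [lra|].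
    intros c Hc Hfc.
    assert (z0 <= c) by (apply Hz0_min; split;
                         [lra | change (f (f c) = c); rewrite !Hfc; reflexivity]).
    lra. }
  repeat split.
  - destruct (Rle_lt_or_eq_dec d v (proj2 Hd)) as [Hlt | ->]; [exact Hlt | lra].
  - lra.
  - apply (iter_ge_of_2cycle f d z0 v Hd_2 Hz0_2); lra.
Qed.

End Interval.

Theorem lemma11
  (a b : R) (f : R -> R)
  (Hab : a <= b)
  (Hmaps : forall x, a <= x <= b -> a <= f x <= b)
  (Hcont : cont_on f a b)
  (m : nat) (Hm3 : (3 <= m)%nat) (Hmodd : Nat.odd m = true)
  (p : R) (* p = min P, where P is the orbit of p *)
  (Hp_I : a <= p <= b)
  (Hp_per : least_period f m p)
  (Hp_min : forall i : nat, p <= iter i f p)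
  (v z z0 d : R)
  (Hv : p <= v < iter (m - 1) f p /\ f v = iter (m - 1) f p)
  (Hz : v < z < iter (m - 1) f p /\ f z = z)
  (Hz0 : is_min (fun x => v <= x <= z /\ iter 2 f x = x) z0)
  (Hd : is_max (fun x => p <= x <= v /\ iter 2 f x = z0) d)
  (mu' : nat -> R)
  (Hmu' : forall n : nat,
      is_max (fun x => p <= x <= d /\ iter (m + 2 * n) f x = d) (mu' n))
  (mu : nat -> nat -> R)
  (Hmu : forall n k : nat, (1 <= k)%nat ->
      is_min (fun x => mu' n <= x <= mu' (S n) /\
                       iter (m + 2 * n + 2 * k) f x = d) (mu n k)) :
  forall n k : nat, (1 <= n)%nat -> (1 <= k)%nat ->
  forall (x : R) (q : nat),
    mu' n <= x <= mu n k ->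
    least_period f q x -> Nat.odd q = true ->
    (m + 2 * n + 2 * k + 2 <= q)%nat.
Proof.
  intros n k _ Hk x q Hx Hq Hqodd.
  destruct Hv as [Hv HfvE], Hz as [Hz _], Hd as [[Hd Hd_2] Hd_max].
  destruct (horseshoe_at_d a b f Hmaps Hcont m p v z z0 d Hm3 Hp_per Hp_I Hv HfvE
              (proj2 Hz) Hz0 Hd Hd_2) as [Hd_lt_v [Hv_down Hd_orbit]].
  pose proof (iter_maps a b f Hmaps (m - 1) p Hp_I) as HE.
  destruct (Hmu' n) as [[Hlo Hlo_d] Hlo_max].
  destruct (Hmu' (S n)) as [[Hnext Hnext_d] _].
  destruct (Hmu n k Hk) as [[Hhi Hhi_d] Hhi_min].
  assert (Hnext_lt_d : mu' (S n) < d).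
  { destruct (Rle_lt_or_eq_dec _ _ (proj2 Hnext)) as [Hlt | Heq]; [exact Hlt|].
    pose proof (Hd_orbit (m + 2 * S n)%nat ltac:(lia)). rewrite Heq in Hnext_d. lra. }
  apply Nat.odd_spec in Hmodd, Hqodd.
  destruct (odd_return_time_ge3 f q x Hq Hqodd) as [t [Ht_odd [Ht_bound Ht_fix]]].
  apply Nat.nlt_ge; intro Hq_small.
  refine (no_odd_cycle_in_window a b f Hmaps Hcont d v _ _ _ Hv_down Hd_orbit
            (m + 2 * n) k (mu' n) (mu n k) x t _ Ht_odd _ _ _ _ Hlo_d _ _ Ht_fix);
    try lra.
  - destruct Hmodd as [r ->]. exists (r + n)%nat. lia.
  - destruct Hmodd as [r ->], Hqodd as [u ->]. lia.
  - intros y Hy Hyd.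
    assert (y <= mu' n) by (apply Hlo_max; split; [lra | exact Hyd]). lra.
  - intros y Hy Hyd.
    assert (mu n k <= y) by (apply Hhi_min; split; [lra | exact Hyd]). lra.
Qed.
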